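(* The map $\Phi:\mathcal{C}\to\bar{\mathbf K}$, $C\mapsto K_C$, is a bijection, and its inverse is given by $\Phi^{-1}(K)=C_K$ for all $K\in\bar{\mathbf K}$.
   Context: Let $\mathcal{X}$ be a nonempty set and let $\mathscr{V}$ be the real vector space of all functions $u:\mathcal{X}\to\mathbb{R}$ (options), with pointwise operations. For $u,v\in\mathscr{V}$, $u\le v$ iff $u(x)\le v(x)$ for all $x\in\mathcal{X}$, and $u<v$ iff $u\le v$ and $u\neq v$. Let $\mathscr{V}_{>0}=\{u\in\mathscr{V}:0<u\}$ and $\mathscr{V}^s_{>0}=\{\{u\}:u\in\mathscr{V}_{>0}\}$. Let $\mathscr{Q}$ be the set of all finite subsets of $\mathscr{V}$ (including $\emptyset$). For $A\in\mathscr{Q}$ and $u\in\mathscr{V}$, $A-u=\{v-u:v\in A\}$. For a positive integer $n$, $\mathbb{R}^{n,+}=\{\boldsymbol\lambda\in\mathbb{R}^n:\lambda_j\ge0\ \forall j,\ \sum_j\lambda_j>0\}$, and for $\boldsymbol\lambda\in\mathbb{R}^n$, $\mathbf u=(u_1,\dots,u_n)\in\mathscr{V}^n$, $\boldsymbol\lambda\mathbf u=\sum_{j=1}^n\lambda_ju_j$. A choice function is a map $C:\mathscr{Q}\to\mathscr{Q}$ with $C(A)\subseteq A$ for all $A$; its rejection function is $R_C(A)=A\setminus C(A)$, and $K_C=\{A\in\mathscr{Q}:0\notin C(A\cup\{0\})\}$. $C$ is coherent if: (C0) $C(A)\neq\emptyset$ for all nonempty $A\in\mathscr{Q}$; (C1)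 for all $A\in\mathscr{Q}$ and $u\in A$: $u\in C(A)\iff 0\in C(A-u)$; (C2) $\{u\}\in K_C$ for all $u\in\mathscr{V}_{>0}$; (C3) for all $A,B\in K_C$ and all maps $\boldsymbol\lambda:A\times B\to\mathbb{R}^{2,+}$, $\{\boldsymbol\lambda(\mathbf u)\mathbf u:\mathbf u\in A\times B\}\in K_C$; (C4) $A\subseteq B\Rightarrow R_C(A)\subseteq R_C(B)$ for all $A,B\in\mathscr{Q}$. $\mathcal{C}$ denotes the set of coherent choice functions. A set of desirable option sets is any $K\subseteq\mathscr{Q}$. It is coherent if for all $A,B\in K$: (K0) $A\setminus\{0\}\in K$; (K1) $\{0\}\notin K$; (K2) $\mathscr{V}^s_{>0}\subseteq K$; (K3) $\{\boldsymbol\lambda(\mathbf u)\mathbf u:\mathbf u\in A\times B\}\in K$ for every map $\boldsymbol\lambda:A\times B\to\mathbb{R}^{2,+}$; (K4) $A\cup Q\in K$ for all $Q\in\mathscr{Q}$. $\bar{\mathbf K}$ denotes the set of coherent sets of desirable option sets. For $K\subseteq\mathscr{Q}$, the choice function $C_K$ is defined by $C_K(A)=\{u\in A:(A-u)\setminus\{0\}\notin K\}$ for all $A\in\mathscr{Q}$. *)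

From HB Require Import structures.
From mathcomp Require Import all_boot all_order all_algebra.
From mathcomp Require Import finmap boolp reals.
Set Implicit Arguments. Unset Strict Implicit. Unset Printing Implicit Defensive.
Import Order.TTheory GRing.Theory Num.Theory.
Local Open Scope ring_scope.
Local Open Scope fset_scope.

Section Defs.
Variables (R : realType) (X : Type).

Definition opt := (X -> R).
Definition zero_opt : opt := fun _ => 0%R.

Definition Qset := {fset opt}.

Definition opt_le (u v : opt) : Prop := forall x, (u x <= v x)%R.
Definition opt_lt (u v : opt) : Prop := opt_le u v /\ u <> v.
Definition Vpos (u : opt) : Prop := opt_lt zero_opt u.

Definition shift (A : Qset) (u : opt) : Qset :=
  [fset (fun x => (v x - u x)%R) | v in A].

Definition pos2 (l : R * R) : Prop := (0 <= fst l)%R /\ (0 <= snd l)%R /\ (0 < fst l + snd l)%R.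

Definition combos (A B : Qset) (lam : opt -> opt -> R * R) : Qset :=
  [fset (fun x => (fst (lam u v) * u x + snd (lam u v) * v x)%R) | u in A, v in B].

Definition choice_fun (C : Qset -> Qset) : Prop := forall A, C A `<=` A.

Definition rej (C : Qset -> Qset) (A : Qset) : Qset := A `\` C A.

Definition K_of (C : Qset -> Qset) : Qset -> Prop :=
  fun A => zero_opt \notin C (zero_opt |` A).

Definition coherent_C (C : Qset -> Qset) : Prop :=
  choice_fun C /\
  (forall A : Qset, A != fset0 -> C A != fset0) /\
  (forall (A : Qset) (u : opt), u \in A ->
              (u \in C A <-> zero_opt \in C (shift A u))) /\
  (forall u, Vpos u -> K_of C [fset u]) /\
  (forall A B lam, K_of C A -> K_of C B ->
              (forall u v, u \in A -> v \in B -> pos2 (lam u v)) ->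
              K_of C (combos A B lam)) /\
  (forall A B : Qset, A `<=` B -> rej C A `<=` rej C B).

Definition coherent_K (K : Qset -> Prop) : Prop :=
  (forall A, K A -> K (A `\ zero_opt)) /\
  ~ K [fset zero_opt] /\
  (forall u, Vpos u -> K [fset u]) /\
  (forall A B lam, K A -> K B ->
              (forall u v, u \in A -> v \in B -> pos2 (lam u v)) ->
              K (combos A B lam)) /\
  (forall A Q, K A -> K (A `|` Q)).

Definition C_of (K : Qset -> Prop) : Qset -> Qset :=
  fun A => [fset u in A | `[< ~ K (shift A u `\ zero_opt) >]].

End Defs.

(* The two round trips are short computations:
   - K_{C_K} = K, because 0 is rejected from {0} ∪ A by C_K exactly when
     (A \ {0}) lies in K, and K is closed under removing 0 (K0) and under
     enlarging (K4);
   - C_{K_C} = C, which is axiom (C1) read through the definition of K_C.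
   For coherence of C_K the only substantial axiom is (C0): C_K never
   rejects every element of a nonempty option set S.  The key step
   ([rejects_remove]) shows, using (K3) with a suitable 0/1 combination,
   that if u and w are both rejected from S then u is still rejected from
   S \ {w}; removing rejected elements one at a time then empties S, while
   K never contains an option set without nonzero elements (K1, K4). *)

From HB Require Import structures.
From mathcomp Require Import all_boot all_order all_algebra.
From mathcomp Require Import finmap boolp reals.
From mathcomp Require Import ring.
Set Implicit Arguments. Unset Strict Implicit. Unset Printing Implicit Defensive.
Import Order.TTheory GRing.Theory Num.Theory.
Local Open Scope ring_scope.
Local Open Scope fset_scope.

Lemma fsetU1D1 (T : choiceType) (a : T) (A : {fset T}) :
  (a |` A) `\ a = A `\ a.
Proof. by apply/fsetP => b; rewrite !inE; case: (b == a). Qed.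

Lemma fsetU1D1r (T : choiceType) (a : T) (A : {fset T}) :
  a |` (A `\ a) = a |` A.
Proof. by apply/fsetP => b; rewrite !inE; case: (b == a). Qed.

Section Shift.
Variables (R : realType) (X : Type).
Local Notation Q := (Qset R X).
Local Notation z := (@zero_opt R X).

Lemma shiftP (A : Q) u a :
  reflect (exists2 v, v \in A & a = (fun x => v x - u x)) (a \in shift A u).
Proof. by apply: (iffP (imfsetP _ _ _ _)) => -[v Hv ->]; exists v. Qed.

Lemma diff_eq0 (v u : opt R X) : ((fun x => v x - u x) == z) = (v == u).
Proof.
apply/eqP/eqP => [vu0|->]; last by apply: funext => x; rewrite subrr.
apply: funext => x; apply/eqP; rewrite -subr_eq0.
by move: (congr1 (fun f => f x) vu0) => /= ->.
Qed.

Lemma shift0 (A : Q) : shift A z = A.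
Proof.
have sub0 (v : opt R X) : (fun x => v x - z x) = v.
  by apply: funext => x; rewrite /zero_opt subr0.
by apply/fsetP => a; apply/shiftP/idP => [[v Hv ->]|Ha]; [rewrite sub0 | exists a].
Qed.

Lemma zero_in_shift (A : Q) u : u \in A -> z \in shift A u.
Proof. by move=> Hu; apply/shiftP; exists u => //; apply: funext => x; rewrite subrr. Qed.

Lemma shiftS (A B : Q) u : A `<=` B -> shift A u `<=` shift B u.
Proof.
move=> sAB; apply/fsubsetP => a /shiftP[v Hv ->].
by apply/shiftP; exists v => //; apply: (fsubsetP sAB).
Qed.

Definition rejects (K : Q -> Prop) (A : Q) (u : opt R X) : Prop :=
  K (shift A u `\ z).

Lemma in_C_of (K : Q -> Prop) A u :
  (u \in C_of K A) = (u \in A) && `[< ~ rejects K A u >].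
Proof. by rewrite /C_of !inE. Qed.

End Shift.

Section FromChoiceFunctions.
Variables (R : realType) (X : Type).
Local Notation Q := (Qset R X).
Local Notation z := (@zero_opt R X).

Lemma K_of_coherent (C : Q -> Q) : coherent_C C -> coherent_K (K_of C).
Proof.
move=> [chC [C0 [_ [C2 [C3 C4]]]]].
split; [|split; [|split; [|split]]].
- by move=> A; rewrite /K_of fsetU1D1r.
- rewrite /K_of fsetUid => zNC.
  have /fset0Pn[x Hx] : C [fset z] != fset0.
    by apply: C0; apply/fset0Pn; exists z; rewrite inE.
  have : x \in [fset z] by apply: (fsubsetP (chC _)).
  by rewrite inE => /eqP xz; move: Hx; rewrite xz (negbTE zNC).
- exact: C2.
- exact: C3.
- move=> A Q' zNC; rewrite /K_of.
  have zrej : z \in rej C (z |` A) by rewrite /rej in_fsetD zNC fsetU11.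
  have sub : z |` A `<=` z |` (A `|` Q') by apply/fsetUS/fsubsetUl.
  by move: (fsubsetP (C4 _ _ sub) _ zrej); rewrite /rej in_fsetD => /andP[].
Qed.

(* C_{K_C} = C: this is axiom (C1) unfolded. *)
Lemma C_of_K_of (C : Q -> Q) : coherent_C C -> C_of (K_of C) = C.
Proof.
move=> [chC [_ [C1 _]]].
apply: funext => A; apply/fsetP => u; rewrite in_C_of.
have [Hu|uNA] /= := boolP (u \in A); last first.
  by apply/esym/negbTE; apply: contra uNA; apply: (fsubsetP (chC A)).
rewrite /rejects /K_of fsetD1K ?zero_in_shift //.
apply/asboolP/idP => [nrej|uC zNC]; last by move/negP: zNC; apply; apply/(C1 _ _ Hu).
by apply/(C1 _ _ Hu); apply: contrapT => zNC; apply/nrej/negP.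
Qed.

End FromChoiceFunctions.

Section FromDesirableSets.
Variables (R : realType) (X : Type).
Local Notation Q := (Qset R X).
Local Notation z := (@zero_opt R X).
Variable K : Q -> Prop.
Hypothesis cohK : coherent_K K.

Lemma K_superset (D E : Q) : D `<=` E -> K D -> K E.
Proof. by move=> /fsetUidPr <- KD; case: cohK => _ [_ [_ [_ K4]]]; apply: K4. Qed.

Lemma K_superset_D1 (D E : Q) : D `\ z `<=` E -> K D -> K E.
Proof. by move=> sDE KD; apply: (K_superset sDE); case: cohK => K0 _; apply: K0. Qed.

Lemma K_nonempty (D : Q) : K D -> D != fset0.
Proof.
move=> KD; apply/negP => /eqP D0; case: cohK => _ [K1 _]; apply: K1.
by apply: K_superset KD; rewrite D0 fsub0set.
Qed.

(* K_{C_K} = K: 0 is rejected from {0} ∪ A by C_K exactly when A \ {0}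
   is desirable, and by (K0) and (K4) this happens exactly when A is. *)
Lemma K_of_C_of : K_of (C_of K) = K.
Proof.
apply: funext => A; apply: propext; rewrite /K_of.
have -> : (z \in C_of K (z |` A)) = `[< ~ K (A `\ z) >].
  by rewrite in_C_of fsetU11 /rejects shift0 fsetU1D1.
split => [|KA]; last first.
  by apply/negP => /asboolP; apply; case: cohK => K0 _; apply: K0.
move/negP => KA0; apply: contrapT => NKA; apply: KA0.
by apply/asboolP => KAz; apply/NKA/(K_superset _ KAz)/fsubD1set.
Qed.

(* Combine (S - u) \ {0} with (S - w) \ {0} by (K3), taking the sum
   (w - u) + (v - w) = v - u on the element w - u and the first argument
   elsewhere: every nonzero result is an element of (S \ {w}) - u. *)
Lemma rejects_remove (S : Q) u w :
  rejects K S u -> rejects K S w -> rejects K (S `\ w) u.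
Proof.
move=> rej_u rej_w.
pose lam (a b : opt R X) : R * R :=
  if a == (fun x => w x - u x) then (1, 1) else (1, 0).
have Kcomb : K (combos (shift S u `\ z) (shift S w `\ z) lam).
  case: cohK => _ [_ [_ [K3 _]]]; apply: K3 => // a b _ _.
  by rewrite /lam /pos2; case: ifP => _ /=; rewrite ?ler01 ?addr0 ?ltr01 ?ltr_wpDl.
apply: (K_superset_D1 _ Kcomb); apply/fsubsetP => c.
rewrite !in_fsetD1 => /andP[c0 /(imfset2P _ _ _ _ _)[a Ha [b Hb Ec]]].
move: Ha Hb c0; rewrite {}Ec !in_fsetD1.
move=> /andP[_ /shiftP[v Hv Ea]] /andP[b0 /shiftP[v' Hv' Eb]] c0; subst a b.
rewrite c0 /=; apply/shiftP; rewrite /lam; case: eqP => [vwu|vNwu] /=.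
- exists v'; first by rewrite diff_eq0 in b0; rewrite in_fsetD1 Hv' andbT.
  by apply: funext => x; move: (congr1 (fun f => f x) vwu) => /= ->; ring.
- exists v; last by apply: funext => x; rewrite mul1r mul0r addr0.
  by rewrite in_fsetD1 Hv andbT; apply/eqP => vw; apply: vNwu; rewrite vw.
Qed.

(* C_K never rejects every element of a nonempty option set: otherwise,
   pick u in S; the nonzero part of S - u contains some w - u with w <> u,
   and by [rejects_remove] all of S \ {w} is still rejected; induct on #|S|. *)
Lemma not_all_rejected n (S : Q) : (#|` S| <= n)%N -> S != fset0 ->
  ~ (forall u, u \in S -> rejects K S u).
Proof.
elim: n S => [|n IH] S.
  by rewrite leqn0 cardfs_eq0 => /eqP ->; rewrite eqxx.
move=> cardS /fset0Pn[u Hu] all_rej.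
have /fset0Pn[t] := K_nonempty (all_rej u Hu).
rewrite in_fsetD1 => /andP[t0 /shiftP[w Hw Et]]; subst t.
rewrite diff_eq0 in t0.
apply: (IH (S `\ w)).
- by move: cardS; rewrite (cardfsD1 w S) Hw add1n ltnS.
- by apply/fset0Pn; exists u; rewrite in_fsetD1 Hu andbT eq_sym.
- by move=> x /fsetD1P[_ Hx]; apply: rejects_remove; apply: all_rej.
Qed.

Lemma C_of_coherent : coherent_C (C_of K).
Proof.
split; [|split; [|split; [|split; [|split]]]].
- by move=> A; apply/fsubsetP => u; rewrite in_C_of => /andP[].
- move=> A A0; apply/negP => /eqP CA0.
  apply: (not_all_rejected (leqnn _) A0) => u Hu.
  have : u \notin C_of K A by rewrite CA0 inE.
  by rewrite in_C_of Hu /= => /asboolPn /contrapT.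
- by move=> A u Hu; rewrite !in_C_of Hu zero_in_shift //= /rejects shift0.
- by rewrite K_of_C_of; case: cohK => _ [_ [K2 _]].
- by rewrite K_of_C_of; case: cohK => _ [_ [_ [K3 _]]].
- move=> A B sAB; apply/fsubsetP => u; rewrite /rej !in_fsetD !in_C_of.
  move=> /andP[+ Hu]; rewrite Hu (fsubsetP sAB _ Hu) /= andbT.
  move=> /asboolPn /contrapT rejA; apply/asboolPn => /(_ _); apply.
  exact/(K_superset _ rejA)/fsetSD/shiftS.
Qed.

End FromDesirableSets.

Theorem theorem2 (R : realType) (X : Type) (hX : inhabited X) :
  (forall C : Qset R X -> Qset R X, coherent_C C -> coherent_K (K_of C)) /\
  (forall K : Qset R X -> Prop, coherent_K K -> coherent_C (C_of K)) /\
  (forall C : Qset R X -> Qset R X, coherent_C C -> C_of (K_of C) = C) /\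
  (forall K : Qset R X -> Prop, coherent_K K -> K_of (C_of K) = K).
Proof.
split; first exact: K_of_coherent.
split; first exact: C_of_coherent.
split; first exact: C_of_K_of.
exact: K_of_C_of.
Qed.
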